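(* The functor $\mathcal M_{\max}$ is (admits the structure of) a lax monoidal functor from $(\mathbf{Ord},\times,(\mathbf 1,=))$ to $(\mathbf{Ord},\times,(\mathbf 1,=))$.
   Context: $\mathbf{Ord}$ is the category of posets and monotone maps, with the cartesian product $\times$ (product order) and the one-point poset $\mathbf 1$ as monoidal structure. For a poset $(X,\le_X)$, $\mathcal M(X)$ is the set of nonempty finite subsets of $X$ whose elements are pairwise incomparable, ordered by $S\le_{\mathcal M(X)}T$ iff every $x\in S$ has some $y\in T$ with $x\le_X y$. For $S\subseteq X$, $S^{\circ}$ is the set of maximal elements of $S$. The functor $\mathcal M_{\max}:\mathbf{Ord}\to\mathbf{Ord}$ is $\mathcal M_{\max}(X)=(\mathcal M(X),\le_{\mathcal M(X)})$, $\mathcal M_{\max}(f)(S)=(f(S))^{\circ}$. *)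

(* Posets are arbitrary (not necessarily decidable) types with a
   Prop-valued partial order; subsets are predicates X -> Prop, compared up to
   extensional equality. *)
From Stdlib Require Import List.

Record Poset := {
  carrier :> Type;
  le : carrier -> carrier -> Prop;
  le_refl : forall x, le x x;
  le_antisym : forall x y, le x y -> le y x -> x = y;
  le_trans : forall x y z, le x y -> le y z -> le x z
}.
Arguments le {p} _ _.

Definition monotone {X Y : Poset} (f : X -> Y) : Prop :=
  forall x y, le x y -> le (f x) (f y).

Definition one : Poset.
Proof.
  refine {| carrier := unit; le := fun x y => x = y |}.
  - reflexivity.
  - intros x y h _; exact h.
  - intros x y z h1 h2; now rewrite h1.
Defined.

Definition prodP (X Y : Poset) : Poset.
Proof.
  refine {| carrier := (X * Y)%type;
            le := fun p q => le (fst p) (fst q) /\ le (snd p) (snd q) |}.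
  - intros [a b]; split; apply le_refl.
  - intros [a b] [c d] [h1 h2] [h3 h4]; simpl in *.
    f_equal; apply le_antisym; assumption.
  - intros [a b] [c d] [e f] [h1 h2] [h3 h4]; simpl in *.
    split; eapply le_trans; eassumption.
Defined.

Definition set (X : Type) := X -> Prop.
Definition seteq {X : Type} (A B : set X) : Prop := forall x, A x <-> B x.

Definition finite_set {X : Type} (S : set X) : Prop :=
  exists l : list X, forall x, S x <-> In x l.
Definition nonempty_set {X : Type} (S : set X) : Prop := exists x, S x.
Definition antichain {X : Poset} (S : set X) : Prop :=
  forall x y, S x -> S y -> x <> y -> ~ le x y /\ ~ le y x.

(* membership in the carrier of M(X) *)
Definition isM {X : Poset} (S : set X) : Prop :=
  finite_set S /\ nonempty_set S /\ antichain S.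

Definition leM {X : Poset} (S T : set X) : Prop :=
  forall x, S x -> exists y, T y /\ le x y.

Definition maxel {X : Poset} (S : set X) : set X :=
  fun x => S x /\ forall y, S y -> le x y -> x = y.

Definition image {X Y : Type} (f : X -> Y) (S : set X) : set Y :=
  fun y => exists x, S x /\ f x = y.

Definition Mmap {X Y : Poset} (f : X -> Y) (S : set X) : set Y :=
  maxel (image f S).

Definition assoc {X Y Z : Poset} (p : prodP (prodP X Y) Z) : prodP X (prodP Y Z) :=
  (fst (fst p), (snd (fst p), snd p)).
Definition lunit {X : Poset} (p : prodP one X) : X := snd p.
Definition runit {X : Poset} (p : prodP X one) : X := fst p.
Definition pmap {X X' Y Y' : Poset} (f : X -> X') (g : Y -> Y')
  (p : prodP X Y) : prodP X' Y' := (f (fst p), g (snd p)).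

Definition Mmax_functor : Prop :=
  (forall (X : Poset) (S : set X), leM S S) /\
  (forall (X : Poset) (S T U : set X), leM S T -> leM T U -> leM S U) /\
  (forall (X : Poset) (S T : set X), isM S -> isM T -> leM S T -> leM T S -> seteq S T) /\
  (forall (X Y : Poset) (f : X -> Y), monotone f ->
     forall S, isM S -> isM (Mmap f S)) /\
  (forall (X Y : Poset) (f : X -> Y), monotone f ->
     forall S T, isM S -> isM T -> leM S T -> leM (Mmap f S) (Mmap f T)) /\
  (forall (X : Poset) (S : set X), isM S -> seteq (Mmap (fun x : X => x) S) S) /\
  (forall (X Y Z : Poset) (f : X -> Y) (g : Y -> Z), monotone f -> monotone g ->
     forall S, isM S -> seteq (Mmap (fun x => g (f x)) S) (Mmap g (Mmap f S))).

(* A lax monoidal structure (eps, mu) on M_max, for (Ord, x, 1) on both sides.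
   eps : 1 -> M(1) is a monotone map from the one-point poset, i.e. an element
   of M(1); mu_{X,Y} : M(X) x M(Y) -> M(X x Y) is given on representatives. *)
Definition lax_monoidal_structure
  (eps : set one)
  (mu : forall X Y : Poset, set X -> set Y -> set (prodP X Y)) : Prop :=
  isM eps /\
  (forall (X Y : Poset) (S : set X) (T : set Y),
     isM S -> isM T -> isM (mu X Y S T)) /\
  (forall (X Y : Poset) (S S' : set X) (T T' : set Y),
     isM S -> isM S' -> isM T -> isM T' ->
     leM S S' -> leM T T' -> leM (mu X Y S T) (mu X Y S' T')) /\
  (forall (X X' Y Y' : Poset) (f : X -> X') (g : Y -> Y'),
     monotone f -> monotone g ->
     forall (S : set X) (T : set Y), isM S -> isM T ->
     seteq (mu X' Y' (Mmap f S) (Mmap g T))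
           (Mmap (pmap f g) (mu X Y S T))) /\
  (forall (X Y Z : Poset) (S : set X) (T : set Y) (U : set Z),
     isM S -> isM T -> isM U ->
     seteq (Mmap (@assoc X Y Z) (mu (prodP X Y) Z (mu X Y S T) U))
           (mu X (prodP Y Z) S (mu Y Z T U))) /\
  (forall (X : Poset) (S : set X), isM S ->
     seteq (Mmap (@lunit X) (mu one X eps S)) S) /\
  (forall (X : Poset) (S : set X), isM S ->
     seteq (Mmap (@runit X) (mu X one S eps)) S).

(** The multiplication is the cartesian product of antichains, [S, T |-> S x T],
    which is again a finite antichain, and the unit is the one-point antichain of [1].
    Everything rests on two facts about maximal elements.  In a finite subset of a
    poset every element lies below a maximal one; this makes [M_max(f)] monotone and
    [M_max] functorial.  And the maximal elements of [A x B] are exactly the pairs of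
    maximal elements of [A] and of [B]; since the image of [S x T] under [f x g] is
    [f(S) x g(T)], this is the naturality of the multiplication.  Associativity and
    unitality hold because the sets involved are already antichains, on which taking
    maximal elements is the identity. *)

From Stdlib Require Import List Classical Setoid.

Section Maximal.
Context {X : Poset}.
Implicit Types A B S T : set X.

Lemma isM_antichain S : isM S -> antichain S.
Proof. intros [_ [_ HS]]; exact HS. Qed.

Lemma antichain_le_eq S x y : antichain S -> S x -> S y -> le x y -> x = y.
Proof.
  intros HS Sx Sy xy.
  destruct (classic (x = y)) as [E | N]; [exact E |].
  exfalso; exact (proj1 (HS x y Sx Sy N) xy).
Qed.

Lemma maxel_antichain A : antichain (maxel A).
Proof.
  intros x y [Ax Mx] [Ay My] N; split; intros H.
  - exact (N (Mx y Ay H)).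
  - exact (N (eq_sym (My x Ax H))).
Qed.

Lemma maxel_id S : antichain S -> seteq (maxel S) S.
Proof.
  intros HS x; split; [intros [Sx _]; exact Sx |].
  intros Sx; split; [exact Sx |].
  intros y Sy; exact (antichain_le_eq S x y HS Sx Sy).
Qed.

Lemma maxel_seteq A B : seteq A B -> seteq (maxel A) (maxel B).
Proof.
  intros E x; unfold maxel.
  split; intros [Ax Mx]; split; try (apply E; exact Ax);
    intros y Ay; apply Mx, E, Ay.
Qed.

(* If the maximal element [m] found in the tail lies below [h], then [h] is maximal. *)
Lemma list_maximal (P : X -> Prop) (l : list X) :
  (exists x, In x l /\ P x) ->
  exists m, In m l /\ P m /\ forall y, In y l -> P y -> le m y -> m = y.
Proof.
  induction l as [| h t IH]; intros [x [lx Px]]; [destruct lx |].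
  destruct (classic (exists x, In x t /\ P x)) as [Ht | Nt].
  - destruct (IH Ht) as [m [tm [Pm Mm]]].
    destruct (classic (P h /\ le m h)) as [[Ph mh] | N].
    + exists h; split; [left; reflexivity | split; [exact Ph |]].
      intros y [<- | ty] Py hy; [reflexivity |].
      assert (m = y) as <- by (apply Mm; [| | apply (le_trans _ m h y)]; assumption).
      exact (le_antisym _ h m hy mh).
    + exists m; split; [right; exact tm | split; [exact Pm |]].
      intros y [<- | ty] Py my; [tauto | exact (Mm y ty Py my)].
  - assert (Ph : P h).
    { destruct lx as [<- | tx]; [exact Px | exfalso; apply Nt; exists x; auto]. }
    exists h; split; [left; reflexivity | split; [exact Ph |]].
    intros y [<- | ty] Py _; [reflexivity | exfalso; apply Nt; exists y; auto].
Qed.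

Lemma finite_maxel_above A a : finite_set A -> A a -> exists m, maxel A m /\ le a m.
Proof.
  intros [l Hl] Aa.
  destruct (list_maximal (fun y => A y /\ le a y) l) as [m [_ [[Am am] Mm]]].
  { exists a; split; [apply Hl, Aa | split; [exact Aa | apply le_refl]]. }
  exists m; split; [split; [exact Am |] | exact am].
  intros y Ay my; apply Mm; [apply Hl, Ay | split; [exact Ay |] | exact my].
  exact (le_trans _ a m y am my).
Qed.

Lemma finite_subset A B : finite_set A -> (forall x, B x -> A x) -> finite_set B.
Proof.
  intros [l Hl] BA.
  assert (Bl : forall x, B x -> In x l) by (intros x Bx; apply Hl, BA, Bx).
  clear A Hl BA; revert B Bl.
  induction l as [| h t IH]; intros B Bl.
  - exists nil; intros x; split; [apply Bl | intros []].
  - destruct (IH (fun x => B x /\ x <> h)) as [l' Hl'].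
    { intros x [Bx N]; destruct (Bl x Bx) as [<- | tx]; [contradiction | exact tx]. }
    destruct (classic (B h)) as [Bh | Nh]; [exists (h :: l') | exists l']; intros x;
      simpl; rewrite <- Hl'; destruct (classic (x = h)) as [-> | N]; intuition congruence.
Qed.

Lemma maxel_finite A : finite_set A -> finite_set (maxel A).
Proof. intros FA; exact (finite_subset A (maxel A) FA (fun x Mx => proj1 Mx)). Qed.

Lemma maxel_nonempty A : finite_set A -> nonempty_set A -> nonempty_set (maxel A).
Proof.
  intros FA [a Aa]; destruct (finite_maxel_above A a FA Aa) as [m [Mm _]].
  exists m; exact Mm.
Qed.

Lemma maxel_cofinal A B :
  (forall b, B b -> A b) -> (forall a, A a -> exists b, B b /\ le a b) ->
  seteq (maxel A) (maxel B).
Proof.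
  intros BA AB x; split.
  - intros [Ax Mx]; destruct (AB x Ax) as [b [Bb xb]].
    assert (x = b) as <- by exact (Mx b (BA b Bb) xb).
    split; [exact Bb |]; intros y By; apply Mx, BA, By.
  - intros [Bx Mx]; split; [apply BA, Bx |]; intros a Aa xa.
    destruct (AB a Aa) as [b [Bb ab]].
    assert (x = b) as <- by exact (Mx b Bb (le_trans _ x a b xa ab)).
    exact (le_antisym _ x a xa ab).
Qed.

Lemma leM_refl S : leM S S.
Proof. intros x Sx; exists x; split; [exact Sx | apply le_refl]. Qed.

Lemma leM_trans S T (U : set X) : leM S T -> leM T U -> leM S U.
Proof.
  intros ST TU x Sx; destruct (ST x Sx) as [y [Ty xy]].
  destruct (TU y Ty) as [z [Uz yz]].
  exists z; split; [exact Uz | exact (le_trans _ x y z xy yz)].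
Qed.

Lemma leM_antichain_sub S T : antichain S -> leM S T -> leM T S ->
  forall x, S x -> T x.
Proof.
  intros HS ST TS x Sx; destruct (ST x Sx) as [y [Ty xy]].
  destruct (TS y Ty) as [z [Sz yz]].
  assert (x = z) as <- by exact (antichain_le_eq S x z HS Sx Sz (le_trans _ x y z xy yz)).
  assert (x = y) as -> by exact (le_antisym _ x y xy yz).
  exact Ty.
Qed.

Lemma leM_antisym S T : antichain S -> antichain T -> leM S T -> leM T S -> seteq S T.
Proof.
  intros HS HT ST TS x; split; [apply (leM_antichain_sub S) | apply (leM_antichain_sub T)];
    assumption.
Qed.

End Maximal.

Section Image.
Context {X Y : Poset}.
Implicit Types S : set X.

Lemma image_finite (f : X -> Y) S : finite_set S -> finite_set (image f S).
Proof.
  intros [l Hl]; exists (map f l); intros y; rewrite in_map_iff; split.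
  - intros [x [Sx <-]]; exists x; split; [reflexivity | apply Hl, Sx].
  - intros [x [<- lx]]; exists x; split; [apply Hl, lx | reflexivity].
Qed.

Lemma Mmap_isM (f : X -> Y) S : isM S -> isM (Mmap f S).
Proof.
  intros [FS [[s Ss] _]]; split; [| split].
  - apply maxel_finite, image_finite, FS.
  - apply maxel_nonempty; [apply image_finite, FS |].
    exists (f s), s; split; [exact Ss | reflexivity].
  - apply maxel_antichain.
Qed.

Lemma Mmap_monotone (f : X -> Y) S T :
  monotone f -> finite_set T -> leM S T -> leM (Mmap f S) (Mmap f T).
Proof.
  intros Hf FT ST y [[x [Sx <-]] _].
  destruct (ST x Sx) as [x' [Tx' xx']].
  destruct (finite_maxel_above (image f T) (f x')) as [m [Mm fm]].
  - apply image_finite, FT.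
  - exists x'; split; [exact Tx' | reflexivity].
  - exists m; split; [exact Mm | exact (le_trans _ _ _ _ (Hf x x' xx') fm)].
Qed.

Lemma Mmap_of_antichain_image (f : X -> Y) S (B : set Y) :
  antichain B -> seteq (image f S) B -> seteq (Mmap f S) B.
Proof.
  intros HB E y; unfold Mmap; rewrite (maxel_seteq _ _ E y); exact (maxel_id B HB y).
Qed.

End Image.

Lemma Mmap_id (X : Poset) (S : set X) : antichain S -> seteq (Mmap (fun x : X => x) S) S.
Proof.
  intros HS; apply Mmap_of_antichain_image; [exact HS |].
  intros x; split; [intros [y [Sy <-]]; exact Sy | intros Sx; exists x; auto].
Qed.

Lemma Mmap_comp (X Y Z : Poset) (f : X -> Y) (g : Y -> Z) (S : set X) :
  monotone g -> finite_set S ->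
  seteq (Mmap (fun x => g (f x)) S) (Mmap g (Mmap f S)).
Proof.
  intros Hg FS; apply maxel_cofinal.
  - intros z [y [[[x [Sx <-]] _] <-]]; exists x; split; [exact Sx | reflexivity].
  - intros z [x [Sx <-]].
    destruct (finite_maxel_above (image f S) (f x)) as [m [Mm fm]].
    + apply image_finite, FS.
    + exists x; split; [exact Sx | reflexivity].
    + exists (g m); split; [exists m; split; [exact Mm | reflexivity] | exact (Hg _ _ fm)].
Qed.

Theorem Mmax_is_functor : Mmax_functor.
Proof.
  refine (conj (@leM_refl) (conj (@leM_trans) (conj _ (conj _ (conj _ (conj _ _)))))).
  - intros X S T HS HT; exact (leM_antisym S T (isM_antichain S HS) (isM_antichain T HT)).
  - intros X Y f _ S HS; exact (Mmap_isM f S HS).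
  - intros X Y f Hf S T _ HT; exact (Mmap_monotone f S T Hf (proj1 HT)).
  - intros X S HS; exact (Mmap_id X S (isM_antichain S HS)).
  - intros X Y Z f g _ Hg S HS; exact (Mmap_comp X Y Z f g S Hg (proj1 HS)).
Qed.

Definition setX {X Y : Poset} (A : set X) (B : set Y) : set (prodP X Y) :=
  fun p => A (fst p) /\ B (snd p).

Definition setT {X : Type} : set X := fun _ => True.

Section Product.
Context {X Y : Poset}.
Implicit Types (A : set X) (B : set Y).

Lemma setX_finite A B : finite_set A -> finite_set B -> finite_set (setX A B).
Proof.
  intros [l Hl] [k Hk]; exists (list_prod l k); intros [x y].
  unfold setX; simpl; rewrite in_prod_iff, Hl, Hk; reflexivity.
Qed.

Lemma setX_antichain A B : antichain A -> antichain B -> antichain (setX A B).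
Proof.
  intros HA HB [x y] [x' y'] [Ax By] [Ax' By'] N; simpl in *.
  split; intros [xx' yy']; apply N; f_equal.
  - exact (antichain_le_eq A x x' HA Ax Ax' xx').
  - exact (antichain_le_eq B y y' HB By By' yy').
  - exact (eq_sym (antichain_le_eq A x' x HA Ax' Ax xx')).
  - exact (eq_sym (antichain_le_eq B y' y HB By' By yy')).
Qed.

Lemma setX_isM A B : isM A -> isM B -> isM (setX A B).
Proof.
  intros [FA [[a Aa] HA]] [FB [[b Bb] HB]]; split; [| split].
  - exact (setX_finite A B FA FB).
  - exists (a, b); split; assumption.
  - exact (setX_antichain A B HA HB).
Qed.

Lemma setX_leM A A' B B' : leM A A' -> leM B B' -> leM (setX A B) (setX A' B').
Proof.
  intros AA' BB' [x y] [Ax By]; simpl in *.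
  destruct (AA' x Ax) as [x' [Ax' xx']]; destruct (BB' y By) as [y' [By' yy']].
  exists (x', y'); split; split; assumption.
Qed.

Lemma maxel_setX A B : seteq (maxel (setX A B)) (setX (maxel A) (maxel B)).
Proof.
  intros [x y]; unfold maxel, setX; simpl; split.
  - intros [[Ax By] M]; split; split; try assumption.
    + intros x' Ax' xx'.
      assert (E := M (x', y) (conj Ax' By) (conj xx' (le_refl _ y))).
      injection E as E; exact E.
    + intros y' By' yy'.
      assert (E := M (x, y') (conj Ax By') (conj (le_refl _ x) yy')).
      injection E as E; exact E.
  - intros [[Ax Mx] [By My]]; split; [split; assumption |].
    intros [x' y'] [Ax' By'] [xx' yy']; simpl in *.
    f_equal; [apply Mx | apply My]; assumption.
Qed.

Lemma image_pmap_setX (X' Y' : Poset) (f : X -> X') (g : Y -> Y') A B :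
  seteq (image (pmap f g) (setX A B)) (setX (image f A) (image g B)).
Proof.
  intros [x' y']; unfold image, setX, pmap; simpl; split.
  - intros [[x y] [[Ax By] E]]; injection E as <- <-.
    split; [exists x | exists y]; split; trivial.
  - intros [[x [Ax <-]] [y [By <-]]]; exists (x, y); simpl; auto.
Qed.

End Product.

Lemma Mmap_pmap_setX (X X' Y Y' : Poset) (f : X -> X') (g : Y -> Y')
  (S : set X) (T : set Y) :
  seteq (setX (Mmap f S) (Mmap g T)) (Mmap (pmap f g) (setX S T)).
Proof.
  intros p; unfold Mmap.
  rewrite <- (maxel_setX (image f S) (image g T) p).
  symmetry; apply maxel_seteq, image_pmap_setX.
Qed.

Lemma setT_one_isM : isM (@setT one).
Proof.
  split; [| split].
  - exists (tt :: nil); intros []; simpl; unfold setT; tauto.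
  - exists tt; exact I.
  - intros [] [] _ _ N; contradiction (N eq_refl).
Qed.

Lemma Mmap_assoc_setX (X Y Z : Poset) (S : set X) (T : set Y) (U : set Z) :
  antichain S -> antichain T -> antichain U ->
  seteq (Mmap (@assoc X Y Z) (setX (setX S T) U)) (setX S (setX T U)).
Proof.
  intros HS HT HU; apply Mmap_of_antichain_image.
  - apply setX_antichain; [| apply setX_antichain]; assumption.
  - intros [x [y z]]; unfold image, setX, assoc; simpl; split.
    + intros [[[x' y'] z'] [[[Sx Ty] Uz] E]]; injection E as <- <- <-; auto.
    + intros [Sx [Ty Uz]]; exists ((x, y), z); simpl; auto.
Qed.

Lemma Mmap_lunit_setX (X : Poset) (S : set X) :
  antichain S -> seteq (Mmap (@lunit X) (setX setT S)) S.
Proof.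
  intros HS; apply Mmap_of_antichain_image; [exact HS |].
  intros x; unfold image, setX, setT, lunit; split.
  - intros [[u x'] [[_ Sx] <-]]; exact Sx.
  - intros Sx; exists (tt, x); simpl; auto.
Qed.

Lemma Mmap_runit_setX (X : Poset) (S : set X) :
  antichain S -> seteq (Mmap (@runit X) (setX S setT)) S.
Proof.
  intros HS; apply Mmap_of_antichain_image; [exact HS |].
  intros x; unfold image, setX, setT, runit; split.
  - intros [[x' u] [[Sx _] <-]]; exact Sx.
  - intros Sx; exists (x, tt); simpl; auto.
Qed.

Theorem propositionD11 :
  Mmax_functor /\
  exists (eps : set one)
         (mu : forall X Y : Poset, set X -> set Y -> set (prodP X Y)),
    lax_monoidal_structure eps mu.
Proof.
  split; [exact Mmax_is_functor |].
  exists setT, (fun X Y => @setX X Y).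
  refine (conj setT_one_isM (conj _ (conj _ (conj _ (conj _ (conj _ _)))))).
  - intros X Y S T; exact (setX_isM S T).
  - intros X Y S S' T T' _ _ _ _; exact (setX_leM S S' T T').
  - intros X X' Y Y' f g _ _ S T _ _; exact (Mmap_pmap_setX X X' Y Y' f g S T).
  - intros X Y Z S T U HS HT HU; exact (Mmap_assoc_setX X Y Z S T U
      (isM_antichain S HS) (isM_antichain T HT) (isM_antichain U HU)).
  - intros X S HS; exact (Mmap_lunit_setX X S (isM_antichain S HS)).
  - intros X S HS; exact (Mmap_runit_setX X S (isM_antichain S HS)).
Qed.
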